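(* Let $q=2^m$, let $k\in\mathbb{F}_q$ with $Tr(k)=1$, let $i\in\mathbb{F}_{q^2}\setminus\mathbb{F}_q$ with $i^2=i+k$, let $\overline{k}\in\mathbb{F}_q$ with $\overline{k}^4=k$, and let $\alpha=A+iB$, $\beta=C+iD$ with $A,B,C,D\in\mathbb{F}_q$ and $\alpha\beta\neq 0$. Then the following are equivalent: (i) $A=(\eta\overline{k}+\eta+\xi)^2(\eta^2\overline{k}+\eta\xi+\xi^2+1)$, $B=\eta^4\overline{k}+\xi^2\eta^2+\xi\eta^3+\eta^2$, $C=\xi^4$, $D=\eta^4$ for some $\xi,\eta\in\mathbb{F}_q$ with $\eta\neq 0$, $Tr\left(\frac{B}{D}+1+\frac{1}{D^2}+\frac{D}{B^2}\right)=1$, and $\eta^2\overline{k}+\xi^2+\xi\eta+1\notin\{0,\eta^2\}$; (ii) $\beta(1+\alpha^{q+1}+\beta^{q+1})+\alpha^{2q}=0$, $\beta^{q+1}\neq 1$, $Tr\left(\frac{\beta^{q+1}}{\alpha^{q+1}}\right)=0$, and $\beta\in\mathbb{F}_{q^2}\setminus\mathbb{F}_q$.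
   Context: $Tr:\mathbb{F}_q\to\mathbb{F}_2$ is the absolute trace $Tr(z)=z+z^2+\cdots+z^{2^{m-1}}$. *)

From HB Require Import structures.
From mathcomp Require Import all_boot all_order all_algebra all_field.
Set Implicit Arguments. Unset Strict Implicit. Unset Printing Implicit Defensive.
Import GRing.Theory.
Local Open Scope ring_scope.

(* Absolute trace F_{2^m} -> F_2, computed inside a field L containing F_{2^m}:
   Tr(z) = z + z^2 + ... + z^(2^(m-1)). *)
Definition absTr (L : fieldType) (m : nat) (z : L) : L :=
  \sum_(j < m) z ^+ (2 ^ j).

Definition inFq (L : fieldType) (q : nat) (x : L) : bool := x ^+ q == x.

From HB Require Import structures.
From mathcomp Require Import all_boot all_order all_algebra all_field.
From mathcomp Require Import ring.

Set Implicit Arguments.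
Unset Strict Implicit.
Unset Printing Implicit Defensive.

Import GRing.Theory.
Local Open Scope ring_scope.

(* Write elements of F_(q^2) as X + iY with X, Y in F_q.  Frobenius maps i to
   i + 1, so the norm of X + iY is X^2 + XY + kY^2 and the equation in (ii)
   splits into two equations over F_q.  With C = xi^4, D = eta^4 and
   P = eta^2 kbar + xi^2 + xi eta + 1 one has N(beta) = (P + 1)^4, and the two
   equations hold exactly when B = eta^2 P and A = P (eta kbar + eta + xi)^2; then
   N(alpha) = P^2 (P + 1)^2 and 1 + N(alpha) + N(beta) = P^2.  As Tr(z^2) = Tr(z)
   on F_q and Tr(kbar) = Tr(k) = 1, both trace conditions become Tr(1 + 1/P^2) = 0,
   while P = eta^2 would turn the argument of the trace in (i) into z^2 + z, whose
   trace is 0. *)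

Section Char2.

Variables (R : comNzRingType) (pchar2 : 2 \in [pchar R]).

Lemma exprD_pchar2 n (x y : R) : (x + y) ^+ (2 ^ n) = x ^+ (2 ^ n) + y ^+ (2 ^ n).
Proof.
apply: exprDn_pchar.
by rewrite pnatX (pnatE _ (pcharf_prime pchar2)) pchar2.
Qed.

Lemma sqrD_pchar2 (x y : R) : (x + y) ^+ 2 = x ^+ 2 + y ^+ 2.
Proof. exact: (exprD_pchar2 1). Qed.

Lemma exp4D_pchar2 (x y : R) : (x + y) ^+ 4 = x ^+ 4 + y ^+ 4.
Proof. exact: (exprD_pchar2 2). Qed.

End Char2.

Lemma addr_sqr_eq0_pchar2 (R : idomainType) (x y : R) :
  2 \in [pchar R] -> x ^+ 2 + y ^+ 2 = 0 -> x = y.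
Proof.
move=> pchar2; rewrite -sqrD_pchar2 // => /eqP.
by rewrite expf_eq0 /= addr_eq0 oppr_pchar2 // => /eqP.
Qed.

Section FixedField.

Variables (F : fieldType) (q : nat).

Lemma inFq1 : inFq q (1 : F).
Proof. by rewrite /inFq expr1n. Qed.

Lemma inFqM (x y : F) : inFq q x -> inFq q y -> inFq q (x * y).
Proof. by rewrite /inFq exprMn => /eqP-> /eqP->. Qed.

Lemma inFqV (x : F) : inFq q x -> inFq q x^-1.
Proof. by rewrite /inFq exprVn => /eqP->. Qed.

Lemma inFqX n (x : F) : inFq q x -> inFq q (x ^+ n).
Proof. by rewrite /inFq exprAC => /eqP->. Qed.

End FixedField.

Section AbsoluteTrace.

Variables (F : fieldType) (pchar2 : 2 \in [pchar F]) (m : nat).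
Implicit Types x y : F.

Lemma inFqD x y : inFq (2 ^ m) x -> inFq (2 ^ m) y -> inFq (2 ^ m) (x + y).
Proof. by rewrite /inFq exprD_pchar2 // => /eqP-> /eqP->. Qed.

Lemma inFq_sqrt x : (0 < m)%N -> inFq (2 ^ m) x ->
  exists2 y, inFq (2 ^ m) y & y ^+ 2 = x.
Proof.
move=> m_gt0 Fx; exists (x ^+ (2 ^ m.-1)); first exact: inFqX.
by rewrite -exprM -expnSr prednK // (eqP Fx).
Qed.

Lemma inFq_root4 x : (0 < m)%N -> inFq (2 ^ m) x ->
  exists2 y, inFq (2 ^ m) y & y ^+ 4 = x.
Proof.
move=> m_gt0 Fx; have [y Fy <-] := inFq_sqrt m_gt0 Fx.
have [z Fz <-] := inFq_sqrt m_gt0 Fy.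
by exists z; rewrite // -exprM.
Qed.

Lemma absTrD x y : absTr m (x + y) = absTr m x + absTr m y.
Proof. by rewrite /absTr -big_split; apply: eq_bigr => j _; rewrite exprD_pchar2. Qed.

Lemma absTr_sqr x : inFq (2 ^ m) x -> absTr m (x ^+ 2) = absTr m x.
Proof.
move=> /eqP Fx; apply: (addIr x).
have shift : \sum_(j < m) (x ^+ 2) ^+ (2 ^ j) = \sum_(j < m) x ^+ (2 ^ j.+1).
  by apply: eq_bigr => j _; rewrite -exprM expnS.
transitivity (\sum_(j < m.+1) x ^+ (2 ^ j)).
  by rewrite /absTr shift big_ord_recl expn0 expr1 addrC.
by rewrite big_ord_recr /= Fx.
Qed.

Lemma absTr_frob n x : inFq (2 ^ m) x -> absTr m (x ^+ (2 ^ n)) = absTr m x.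
Proof.
move=> Fx; elim: n => [|n IHn]; first by rewrite expr1.
by rewrite expnSr exprM absTr_sqr ?IHn //; apply: inFqX.
Qed.

Lemma absTr_sqrD x : inFq (2 ^ m) x -> absTr m (x ^+ 2 + x) = 0.
Proof. by move=> Fx; rewrite absTrD absTr_sqr // addrr_pchar2. Qed.

End AbsoluteTrace.

Ltac inFq_closure :=
  repeat first [ assumption | apply: inFq1 | apply: inFqD | apply: inFqM
               | apply: inFqV | apply: inFqX ].

Definition norm_form (R : pzRingType) (k X Y : R) := X ^+ 2 + X * Y + k * Y ^+ 2.

Lemma norm_formZ (R : comPzRingType) (k c X Y : R) :
  norm_form k (c * X) (c * Y) = c ^+ 2 * norm_form k X Y.
Proof. by rewrite /norm_form; ring. Qed.

(* The equation of (ii) in the coordinates alpha = A + iB, beta = C + iD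
   (see coord_eqn_Fq_i). *)
Definition coord_eqn (R : pzRingType) (k A B C D : R) : Prop :=
  let s := 1 + norm_form k A B + norm_form k C D in
  C * s + A ^+ 2 + (1 + k) * B ^+ 2 = 0 /\ D * s + B ^+ 2 = 0.

Section QuadraticExtension.

Variables (F : fieldType) (pchar2 : 2 \in [pchar F]) (m : nat) (k i : F).
Hypotheses (Fk : inFq (2 ^ m) k) (Fi : ~~ inFq (2 ^ m) i) (i2 : i ^+ 2 = i + k).

(* [ring: (pcharf0 pchar2)] only cancels coefficients that are exactly 2, which is
   why powers of sums get expanded by Frobenius before [ring] is called. *)
Lemma frob_i : i ^+ (2 ^ m) = i + 1.
Proof.
set j := i ^+ (2 ^ m).
have j2 : j ^+ 2 = j + k by rewrite -exprM mulnC exprM i2 exprD_pchar2 // (eqP Fk).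
have : (j + i) * (j + i + 1) = 0 by ring: j2 i2 (pcharf0 pchar2).
move/eqP; rewrite mulf_eq0 -addrA !addr_eq0 !(oppr_pchar2 pchar2).
case/orP=> [/eqP ji | /eqP //].
by move: Fi; rewrite /inFq -/j ji eqxx.
Qed.

Section FqCoordinates.

Variables (X Y : F).
Hypotheses (FX : inFq (2 ^ m) X) (FY : inFq (2 ^ m) Y).

Lemma frob_Fq_i : (X + i * Y) ^+ (2 ^ m) = X + Y + i * Y.
Proof. by rewrite exprD_pchar2 // exprMn frob_i (eqP FX) (eqP FY); ring. Qed.

Lemma norm_Fq_i : (X + i * Y) ^+ (2 ^ m).+1 = norm_form k X Y.
Proof. by rewrite exprS frob_Fq_i /norm_form; ring: i2 (pcharf0 pchar2). Qed.

Lemma frob2_Fq_i :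
  (X + i * Y) ^+ (2 * 2 ^ m) = X ^+ 2 + (1 + k) * Y ^+ 2 + i * Y ^+ 2.
Proof. by rewrite mulnC exprM frob_Fq_i; ring: (pcharf0 pchar2) i2. Qed.

Lemma inFq_Fq_i : inFq (2 ^ m) (X + i * Y) = (Y == 0).
Proof.
rewrite /inFq frob_Fq_i -subr_eq0.
by have -> : X + Y + i * Y - (X + i * Y) = Y by ring.
Qed.

Lemma Fq_i_eq0 : X + i * Y = 0 -> X = 0 /\ Y = 0.
Proof.
move=> XY0; have Y0 : Y = 0.
  have : (X + i * Y) ^+ (2 ^ m) = 0 by rewrite XY0 expr0n expn_eq0.
  by rewrite frob_Fq_i -addrAC XY0 add0r.
by move: XY0; rewrite Y0 mulr0 addr0.
Qed.

End FqCoordinates.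

Lemma coord_eqn_Fq_i A B C D :
  inFq (2 ^ m) A -> inFq (2 ^ m) B -> inFq (2 ^ m) C -> inFq (2 ^ m) D ->
  (C + i * D) * (1 + norm_form k A B + norm_form k C D) + (A + i * B) ^+ (2 * 2 ^ m) = 0
  <-> coord_eqn k A B C D.
Proof.
move=> FA FB FC FD; rewrite frob2_Fq_i // /coord_eqn; set s := 1 + _ + _.
have Fs : inFq (2 ^ m) s by rewrite /s /norm_form; inFq_closure.
have FX : inFq (2 ^ m) (C * s + A ^+ 2 + (1 + k) * B ^+ 2) by inFq_closure.
have FY : inFq (2 ^ m) (D * s + B ^+ 2) by inFq_closure.
have -> : (C + i * D) * s + (A ^+ 2 + (1 + k) * B ^+ 2 + i * B ^+ 2)
          = C * s + A ^+ 2 + (1 + k) * B ^+ 2 + i * (D * s + B ^+ 2) by ring.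
by split=> [/(Fq_i_eq0 FX FY) | [-> ->]]; rewrite ?mulr0 ?addr0.
Qed.

End QuadraticExtension.

(* Condition (i) reads A = P u^2, B = eta^2 P, C = xi^4, D = eta^4. *)
Definition param_u (R : pzRingType) (kbar xi eta : R) := eta * kbar + eta + xi.

Definition param_P (R : pzRingType) (kbar xi eta : R) :=
  eta ^+ 2 * kbar + xi ^+ 2 + xi * eta + 1.

Section Parametrization.

Variables (F : fieldType) (pchar2 : 2 \in [pchar F]) (kbar xi eta : F).

Local Notation k := (kbar ^+ 4).
Local Notation u := (param_u kbar xi eta).
Local Notation P := (param_P kbar xi eta).

Lemma param_u4 : u ^+ 4 = xi ^+ 4 + (1 + k) * eta ^+ 4.
Proof. by rewrite /param_u !exp4D_pchar2 // !exprMn; ring. Qed.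

Lemma norm_form_param_u : norm_form k (u ^+ 2) (eta ^+ 2) = (P + 1) ^+ 2.
Proof.
by rewrite /norm_form /param_u /param_P !sqrD_pchar2 //; ring: (pcharf0 pchar2).
Qed.

Lemma norm_form_param : norm_form k (P * u ^+ 2) (eta ^+ 2 * P) = P ^+ 2 * (P + 1) ^+ 2.
Proof. by rewrite [eta ^+ 2 * P]mulrC norm_formZ norm_form_param_u. Qed.

Lemma norm_form_param4 : norm_form k (xi ^+ 4) (eta ^+ 4) = (P + 1) ^+ 4.
Proof. by rewrite /param_P !exp4D_pchar2 // /norm_form; ring: (pcharf0 pchar2). Qed.

Lemma norm_form_param_neq0 :
  norm_form k (P * u ^+ 2) (eta ^+ 2 * P) != 0 -> P + 1 != 0.
Proof. by rewrite norm_form_param mulf_eq0 negb_or !expf_eq0 /= => /andP[_]. Qed.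

Lemma norm_form_param4_eq1 : (norm_form k (xi ^+ 4) (eta ^+ 4) == 1) = (P == 0).
Proof.
by rewrite norm_form_param4 exp4D_pchar2 // expr1n -subr_eq0 addrK expf_eq0.
Qed.

Lemma param_coord_eqn : coord_eqn k (P * u ^+ 2) (eta ^+ 2 * P) (xi ^+ 4) (eta ^+ 4).
Proof.
rewrite /coord_eqn /=.
have -> : 1 + norm_form k (P * u ^+ 2) (eta ^+ 2 * P) + norm_form k (xi ^+ 4) (eta ^+ 4)
          = P ^+ 2.
  rewrite norm_form_param norm_form_param4.
  by rewrite (sqrD_pchar2 pchar2 P) (exp4D_pchar2 pchar2 P); ring: (pcharf0 pchar2).
split; last by ring: (pcharf0 pchar2).
have -> : (P * u ^+ 2) ^+ 2 = P ^+ 2 * u ^+ 4 by ring.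
by rewrite param_u4; ring: (pcharf0 pchar2).
Qed.

Lemma coord_eqn_param A B : eta != 0 -> P != 0 ->
  coord_eqn k A B (xi ^+ 4) (eta ^+ 4) -> A = P * u ^+ 2 /\ B = eta ^+ 2 * P.
Proof.
move=> eta0 P0; rewrite /coord_eqn /=; set s := 1 + _ + _; case=> eqnC eqnD.
have AB : eta ^+ 2 * A = B * u ^+ 2.
  apply: addr_sqr_eq0_pchar2 => //.
  transitivity (eta ^+ 4 * (xi ^+ 4 * s + A ^+ 2 + (1 + k) * B ^+ 2)
                + xi ^+ 4 * (eta ^+ 4 * s + B ^+ 2)); last first.
    by rewrite eqnC eqnD !mulr0 addr0.
  have -> : (B * u ^+ 2) ^+ 2 = B ^+ 2 * u ^+ 4 by ring.
  by rewrite param_u4; ring: (pcharf0 pchar2).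
have normAB : eta ^+ 4 * norm_form k A B = B ^+ 2 * (P + 1) ^+ 2.
  rewrite (exprM eta 2 2) -norm_formZ AB [eta ^+ 2 * B]mulrC.
  by rewrite norm_formZ norm_form_param_u.
have BP : B = eta ^+ 2 * P.
  apply: (mulIf P0); apply/esym/addr_sqr_eq0_pchar2 => //.
  rewrite -eqnD /s norm_form_param4 (exp4D_pchar2 pchar2 P).
  by ring: normAB (pcharf0 pchar2).
split=> //; apply: (mulfI (expf_neq0 2 eta0)).
by rewrite AB BP; ring.
Qed.

End Parametrization.

Section TraceParametrization.

Variables (F : fieldType) (pchar2 : 2 \in [pchar F]) (m : nat) (kbar xi eta : F).
Hypotheses (Fkbar : inFq (2 ^ m) kbar) (Fxi : inFq (2 ^ m) xi) (Feta : inFq (2 ^ m) eta).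
Hypothesis (Trkbar : absTr m kbar = 1).

Local Notation k := (kbar ^+ 4).
Local Notation u := (param_u kbar xi eta).
Local Notation P := (param_P kbar xi eta).

Lemma absTr_param : eta != 0 -> P != 0 -> P + 1 != 0 ->
  absTr m (eta ^+ 2 * P / eta ^+ 4 + 1 + 1 / (eta ^+ 4) ^+ 2
           + eta ^+ 4 / (eta ^+ 2 * P) ^+ 2)
  = 1 + absTr m (norm_form k (xi ^+ 4) (eta ^+ 4)
                 / norm_form k (P * u ^+ 2) (eta ^+ 2 * P)).
Proof.
move=> eta0 P0 P10.
have FP : inFq (2 ^ m) P by rewrite /param_P; inFq_closure.
have -> : eta ^+ 2 * P / eta ^+ 4 + 1 + 1 / (eta ^+ 4) ^+ 2 + eta ^+ 4 / (eta ^+ 2 * P) ^+ 2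
    = kbar + ((xi / eta) ^+ 2 + xi / eta) + eta^-1 ^+ (2 ^ 3) + eta^-1 ^+ 2 + 1
      + P^-1 ^+ 2.
  by rewrite {1}/param_P; field; rewrite eta0 P0.
have -> : norm_form k (xi ^+ 4) (eta ^+ 4) / norm_form k (P * u ^+ 2) (eta ^+ 2 * P)
          = 1 + P^-1 ^+ 2.
  rewrite norm_form_param4 // norm_form_param //.
  have -> : (P + 1) ^+ 4 / (P ^+ 2 * (P + 1) ^+ 2) = (1 + P^-1) ^+ 2.
    by field; rewrite P0 P10.
  by rewrite sqrD_pchar2 // expr1n.
rewrite !absTrD // !absTr_sqr ?absTr_frob ?Trkbar; try inFq_closure.
by ring: (pcharf0 pchar2).
Qed.

End TraceParametrization.

Definition condition_i (F : fieldType) (m : nat) (kbar A B C D : F) : Prop :=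
  exists xi eta : F,
    [/\ inFq (2 ^ m) xi, inFq (2 ^ m) eta & eta != 0] /\
    [/\ A = (eta * kbar + eta + xi) ^+ 2 * (eta ^+ 2 * kbar + eta * xi + xi ^+ 2 + 1),
        B = eta ^+ 4 * kbar + xi ^+ 2 * eta ^+ 2 + xi * eta ^+ 3 + eta ^+ 2,
        C = xi ^+ 4 & D = eta ^+ 4]
    /\ absTr m (B / D + 1 + 1 / D ^+ 2 + D / B ^+ 2) = 1
    /\ eta ^+ 2 * kbar + xi ^+ 2 + xi * eta + 1 \notin [:: 0; eta ^+ 2].

Definition condition_ii_coord (F : fieldType) (m : nat) (kbar A B C D : F) : Prop :=
  [/\ coord_eqn (kbar ^+ 4) A B C D, norm_form (kbar ^+ 4) C D != 1,
      absTr m (norm_form (kbar ^+ 4) C D / norm_form (kbar ^+ 4) A B) = 0 & D != 0].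

Section Equivalence.

Variables (F : fieldType) (pchar2 : 2 \in [pchar F]) (m : nat) (kbar A B C D : F).
Hypotheses (Fkbar : inFq (2 ^ m) kbar) (Trkbar : absTr m kbar = 1).
Hypothesis (normAB0 : norm_form (kbar ^+ 4) A B != 0).

Lemma condition_i_coord : condition_i m kbar A B C D -> condition_ii_coord m kbar A B C D.
Proof.
case=> xi [eta [[Fxi Feta eta0] [[eA eB -> ->] [Tr1]]]].
rewrite -/(param_P kbar xi eta) !inE negb_or => /andP[P0 _].
have {}eA : A = param_P kbar xi eta * param_u kbar xi eta ^+ 2.
  by rewrite eA /param_P /param_u; ring.
have {}eB : B = eta ^+ 2 * param_P kbar xi eta by rewrite eB /param_P; ring.
subst A B; have P10 := norm_form_param_neq0 pchar2 normAB0.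
split.
- exact: param_coord_eqn.
- by rewrite norm_form_param4_eq1.
- by apply: (addrI 1); rewrite addr0 -absTr_param.
- by rewrite expf_neq0.
Qed.

Hypotheses (FC : inFq (2 ^ m) C) (FD : inFq (2 ^ m) D).

Lemma condition_ii_coord_i :
  condition_ii_coord m kbar A B C D -> condition_i m kbar A B C D.
Proof.
case=> eqn normCD1 Tr0 D0.
have m_gt0 : (0 < m)%N.
  rewrite lt0n; apply/eqP => m0; move: Trkbar.
  by rewrite m0 /absTr big_ord0 => /eqP; rewrite eq_sym oner_eq0.
have [xi Fxi eC] := inFq_root4 m_gt0 FC; have [eta Feta eD] := inFq_root4 m_gt0 FD.
subst C D; have eta0 : eta != 0 by apply: contra D0 => /eqP->; rewrite expr0n.
have P0 : param_P kbar xi eta != 0 by rewrite -norm_form_param4_eq1.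
have [eA eB] := coord_eqn_param pchar2 eta0 P0 eqn.
subst A B; have P10 := norm_form_param_neq0 pchar2 normAB0.
have Tr1 := absTr_param pchar2 Fkbar Fxi Feta Trkbar eta0 P0 P10.
rewrite Tr0 addr0 in Tr1.
exists xi, eta; split=> //; split; first by split=> //; rewrite /param_P /param_u; ring.
split=> //; rewrite -/(param_P kbar xi eta) !inE negb_or P0 /=; apply/eqP => Peta.
have Fe : inFq (2 ^ m) (eta^-1 ^+ 4) by inFq_closure.
move: Tr1; rewrite Peta.
have -> : eta ^+ 2 * eta ^+ 2 / eta ^+ 4 + 1 + 1 / (eta ^+ 4) ^+ 2
          + eta ^+ 4 / (eta ^+ 2 * eta ^+ 2) ^+ 2 = (eta^-1 ^+ 4) ^+ 2 + eta^-1 ^+ 4 + 2%:R.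
  by field.
by rewrite (pcharf0 pchar2) addr0 absTr_sqrD // => /eqP; rewrite eq_sym oner_eq0.
Qed.

End Equivalence.

Theorem proposition3 (m : nat) (L : finFieldType)
  (hL : #|L| = (2 ^ m * 2 ^ m)%N)
  (k i kbar A B C D : L)
  (hk : inFq (2 ^ m) k) (hTrk : absTr m k = 1)
  (hi : ~~ inFq (2 ^ m) i) (hi2 : i ^+ 2 = i + k)
  (hkbar : inFq (2 ^ m) kbar) (hkbar4 : kbar ^+ 4 = k)
  (hA : inFq (2 ^ m) A) (hB : inFq (2 ^ m) B)
  (hC : inFq (2 ^ m) C) (hD : inFq (2 ^ m) D)
  (hab : (A + i * B) * (C + i * D) != 0) :
  let q := (2 ^ m)%N in
  let alpha := A + i * B in
  let beta := C + i * D in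
  (exists xi eta : L,
      [/\ inFq q xi, inFq q eta & eta != 0] /\
      [/\ A = (eta * kbar + eta + xi) ^+ 2
                * (eta ^+ 2 * kbar + eta * xi + xi ^+ 2 + 1),
          B = eta ^+ 4 * kbar + xi ^+ 2 * eta ^+ 2 + xi * eta ^+ 3 + eta ^+ 2,
          C = xi ^+ 4 & D = eta ^+ 4]
      /\ absTr m (B / D + 1 + 1 / D ^+ 2 + D / B ^+ 2) = 1
      /\ eta ^+ 2 * kbar + xi ^+ 2 + xi * eta + 1 \notin [:: 0; eta ^+ 2])
  <->
  [/\ beta * (1 + alpha ^+ q.+1 + beta ^+ q.+1) + alpha ^+ (2 * q) = 0,
      beta ^+ q.+1 != 1,
      absTr m (beta ^+ q.+1 / alpha ^+ q.+1) = 0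
    & ~~ inFq q beta].
Proof.
move=> q alpha beta; rewrite {}/q {}/alpha {}/beta.
have pchar2 : 2 \in [pchar L] by apply: (@card_finPcharP _ _ (m + m)); rewrite ?hL ?expnD.
have Trkbar : absTr m kbar = 1 by rewrite -hTrk -hkbar4 (absTr_frob 2).
subst k; have normAB0 : norm_form (kbar ^+ 4) A B != 0.
  move: hab; rewrite mulf_eq0 negb_or => /andP[alpha0 _].
  by rewrite -(norm_Fq_i pchar2 hk hi hi2 hA hB) expf_neq0.
apply: (@iff_trans _ (condition_ii_coord m kbar A B C D)).
  split; [exact: condition_i_coord | exact: condition_ii_coord_i].
rewrite !(norm_Fq_i pchar2 hk hi hi2) // (inFq_Fq_i pchar2 hk hi hi2) //.
by split=> -[/(coord_eqn_Fq_i pchar2 hk hi hi2 hA hB hC hD)]; split.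
Qed.
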